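(* The incentive ratio for Leontief exchange economies equals $+\infty$, and the incentive ratio for Cobb--Douglas exchange economies equals $+\infty$. That is, for each of these two classes of utility functions $U$ and for every real $N>0$ there exist an exchange economy with utilities in $U$, an agent $i$ and a misreport $u_i'\in U$ such that $$\frac{\max_{x'\in\mathcal{E}(u_i')} u_i(x_i')}{\min_{x\in\mathcal{E}(u_i)} u_i(x_i)}\ \ge\ N .$$
   Context: An exchange economy with $n$ agents and $m$ commodities is a tuple $((u_i)_{i=1}^n,(e_i)_{i=1}^n)$, where $u_i:\mathbb{R}_+^m\to\mathbb{R}$ is agent $i$'s utility function and $e_i\in\mathbb{R}_+^m$ is agent $i$'s endowment ($e_{ij}$ is the amount of commodity $j$ owned by agent $i$). Given prices $p\in\mathbb{R}^m$, agent $i$'s demand is the set of solutions of: maximize $u_i(x_i)$ subject to $p\cdot x_i\le p\cdot e_i$, $x_i\ge 0$. A competitive (Walrasian) equilibrium is a pair $(p,x)$ with $p\in\mathbb{R}_+^m$, $x=(x_1,\dots,x_n)\in(\mathbb{R}_+^m)^n$, such that markets clear ($\sum_i x_{ij}=\sum_i e_{ij}$ for all $j$) and each $x_i$ is in agent $i$'s demand at $p$. For fixed $u_{-i}$ and $e$, if agent $i$ reports utility $\tilde u_i$ (others report truthfully), $\mathcal{E}(\tilde u_i)$ denotes the set of allocations $x$ for which some $p\in\mathbb{R}_+^m$ makes $(p,x)$ a competitive equilibrium of the economy with utilities $(\tilde u_i,u_{-i})$ and endowments $e$. For a class $U$ of utility functions, the incentive ratio of the market is $$\zeta=\max_{i}\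 \max_{u_{-i}\in U^{n-1},\,e}\ \max_{u_i'\in U}\frac{\max_{x'\in\mathcal{E}(u_i')}u_i(x_i')}{\min_{x\in\mathcal{E}(u_i)}u_i(x_i)},$$ where the allocation obtained under a misreport is evaluated with the true utility $u_i\in U$. Leontief utilities: $u(x)=\min_{j\in[m]}\{x_j/\alpha_j\}$ with $\alpha\in\mathbb{R}_{++}^m$. Cobb--Douglas utilities: $u(x)=\prod_{j=1}^m x_j^{\alpha_j}$ with $0\le\alpha_j\le 1$ and $\sum_j\alpha_j=1$. *)

From HB Require Import structures.
From mathcomp Require Import all_boot all_order all_algebra.
From mathcomp Require Import reals exp.
Set Implicit Arguments. Unset Strict Implicit. Unset Printing Implicit Defensive.
Import Order.TTheory GRing.Theory Num.Theory.
Local Open Scope ring_scope.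

Section Economy.
Variable R : realType.

Definition bundle (m : nat) := 'I_m -> R.

Definition dot {m} (p x : bundle m) : R := \sum_(j < m) p j * x j.

Definition nonneg {m} (x : bundle m) : Prop := forall j, 0 <= x j.

Definition in_demand {m} (u : bundle m -> R) (p e x : bundle m) : Prop :=
  [/\ nonneg x, dot p x <= dot p e &
      forall y : bundle m, nonneg y -> dot p y <= dot p e -> u y <= u x].

Definition competitive_eq {n m} (u : 'I_n -> bundle m -> R) (e : 'I_n -> bundle m)
  (p : bundle m) (x : 'I_n -> bundle m) : Prop :=
  [/\ nonneg p,
      (forall j, \sum_(i < n) x i j = \sum_(i < n) e i j) &
      forall i, in_demand (u i) p (e i) (x i)].

Definition eq_alloc {n m} (u : 'I_n -> bundle m -> R) (e : 'I_n -> bundle m)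
  (x : 'I_n -> bundle m) : Prop := exists p, competitive_eq u e p x.

Definition misreport {n m} (u : 'I_n -> bundle m -> R) (i : 'I_n)
  (u' : bundle m -> R) : 'I_n -> bundle m -> R :=
  fun k => if k == i then u' else u k.

Definition leontief {m} (alpha : bundle m.+1) (x : bundle m.+1) : R :=
  \big[Num.min/(x ord0 / alpha ord0)]_(j < m.+1) (x j / alpha j).

Definition is_leontief {m} (u : bundle m.+1 -> R) : Prop :=
  exists alpha : bundle m.+1, (forall j, 0 < alpha j) /\ forall x, u x = leontief alpha x.

(* Cobb-Douglas utility prod_j x_j ^ alpha_j (powR, with 0 ^ 0 = 1) *)
Definition cobb_douglas {m} (alpha : bundle m.+1) (x : bundle m.+1) : R :=
  \prod_(j < m.+1) (x j `^ alpha j).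

Definition is_cobb_douglas {m} (u : bundle m.+1 -> R) : Prop :=
  exists alpha : bundle m.+1,
    [/\ (forall j, 0 <= alpha j <= 1), \sum_(j < m.+1) alpha j = 1 &
        forall x, u x = cobb_douglas alpha x].

(* Rendered as: E(u_i) is nonempty, and some x' in E(u') has
   u_i(x'_i) > 0 and u_i(x'_i) >= N * u_i(x_i) for every x in E(u_i). *)
Definition incentive_ratio_at_least
  (U : forall m : nat, (bundle m.+1 -> R) -> Prop) (N : R) : Prop :=
  exists (n m : nat) (u : 'I_n -> bundle m.+1 -> R) (e : 'I_n -> bundle m.+1)
         (i : 'I_n) (u' : bundle m.+1 -> R),
    [/\ (forall k, U m (u k)), (forall k, nonneg (e k)), U m u',
        (exists x, eq_alloc u e x) &
        exists x', [/\ eq_alloc (misreport u i u') e x',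
                       0 < u i (x' i) &
                       forall x, eq_alloc u e x -> N * u i (x i) <= u i (x' i)]].

End Economy.

From HB Require Import structures.
From mathcomp Require Import all_boot all_order all_algebra.
From mathcomp Require Import reals exp ring lra.
Set Implicit Arguments. Unset Strict Implicit. Unset Printing Implicit Defensive.
Import Order.TTheory GRing.Theory Num.Theory.
Local Open Scope ring_scope.

(* Agent 0 owns one unit of good 0 and agent 1 one unit of good 1; agent 0
   also wants good 1.  After a suitable misreport (Leontief weights (1, 1)
   instead of (1, 2), resp. Cobb-Douglas weights (1, 0) instead of (0, 1)), the
   prices (1, 0) support an equilibrium in which agent 1 is broke and agent 0
   takes everything.  Reporting truthfully she gets little in every
   equilibrium.  With Leontief weights (1, 2) and (1, 1), prices with p_0 > 0
   make the two demands for good 1 exceed the one unit available, so p_0 = 0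
   and agent 0 can afford nothing.  With Cobb-Douglas weights (0, 1) and
   (b, 1 - b), all prices are positive, agent 1 spends the share 1 - b of her
   income on good 1, and agent 0 is left with exactly b units of it against one
   unit after the misreport; b = 1 / (N + 1) gives the ratio N + 1. *)

Section Leontief.
Variables (R : realType) (m : nat) (a : bundle R m.+1).

Lemma leontief_le x j : leontief a x <= x j / a j.
Proof. exact: bigmin_le. Qed.

Lemma le_leontief x z : (forall j, z <= x j / a j) -> z <= leontief a x.
Proof. by move=> zx; apply: le_bigmin. Qed.

Hypothesis a_gt0 : forall j, 0 < a j.

Lemma leontief_proportional x s : (forall j, x j = s * a j) -> leontief a x = s.
Proof.
move=> x_prop; have xaK j : x j / a j = s by rewrite x_prop mulfK ?gt_eqF.
apply/le_anti/andP; split; first by rewrite -(xaK ord0) leontief_le.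
by apply: le_leontief => j; rewrite xaK.
Qed.

Lemma leontief_id : leontief a a = 1.
Proof. by apply: leontief_proportional => j; rewrite mul1r. Qed.

Lemma leontief0 : leontief a (fun=> 0) = 0.
Proof. by apply: leontief_proportional => j; rewrite mul0r. Qed.

Lemma in_demand_leontief_ge p e x : 0 <= dot p e -> 0 < dot p a ->
  in_demand (leontief a) p e x -> dot p e / dot p a <= leontief a x.
Proof.
move=> income_ge0 pa_gt0 [_ _ x_opt]; set s := dot p e / dot p a.
rewrite -[s in s <= _](@leontief_proportional (fun j => s * a j)) //; apply: x_opt.
  by move=> j; rewrite mulr_ge0 ?divr_ge0 // ltW.
rewrite /dot; under eq_bigr do rewrite mulrCA; rewrite -mulr_sumr.
by rewrite -/(dot p a) divfK ?gt_eqF.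
Qed.

End Leontief.

Lemma ln_le_subr1 (R : realType) (t : R) : 0 < t -> ln t <= t - 1.
Proof. by move=> t_gt0; have := expR_ge1Dx (ln t); rewrite lnK ?posrE //; lra. Qed.

Lemma ln_lt_subr1 (R : realType) (t : R) : 0 < t -> t != 1 -> ln t < t - 1.
Proof.
move=> t_gt0 t_neq1; have /expR_gt1Dx : ln t != 0 by rewrite ln_eq0.
by rewrite lnK ?posrE //; lra.
Qed.

Lemma weighted_ln_lt (R : realType) (I : finType) (w t : I -> R) k :
  (forall j, 0 < w j) -> (forall j, 0 < t j) -> t k != 1 ->
  \sum_j w j * ln (t j) < \sum_j w j * (t j - 1).
Proof.
move=> w_gt0 t_gt0 tk_neq1; rewrite [ltLHS](bigD1 k) // [ltRHS](bigD1 k) //=.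
apply: ltr_leD; first by rewrite ltr_pM2l // ln_lt_subr1.
by apply: ler_sum => j _; rewrite ler_wpM2l ?ln_le_subr1 // ltW.
Qed.

Definition cd_demand (R : realType) (n : nat) (alpha p : bundle R n) (W : R) : bundle R n :=
  fun j => alpha j * W / p j.

Section CobbDouglas.
Variables (R : realType) (m : nat) (alpha : bundle R m.+1).

Lemma le_cobb_douglas x y : (forall j, 0 <= alpha j) -> nonneg x ->
  (forall j, x j <= y j) -> cobb_douglas alpha x <= cobb_douglas alpha y.
Proof.
move=> alpha_ge0 x_ge0 xy; apply: ler_prod => j _.
by rewrite powR_ge0 ge0_ler_powR ?nnegrE // (le_trans (x_ge0 j)).
Qed.

Lemma cobb_douglas1 : cobb_douglas alpha (fun=> 1) = 1.
Proof. by apply: big1 => j _; rewrite powR1. Qed.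

Lemma cobb_douglas_eq0 x j : 0 < alpha j -> x j = 0 -> cobb_douglas alpha x = 0.
Proof. by move=> alpha_gt0 xj0; rewrite /cobb_douglas (bigD1 j) //= xj0 powR0 ?gt_eqF ?mul0r. Qed.

Lemma ln_cobb_douglas x : (forall j, 0 < x j) ->
  ln (cobb_douglas alpha x) = \sum_j alpha j * ln (x j).
Proof.
move=> x_gt0; suff [] : 0 < cobb_douglas alpha x /\
    ln (cobb_douglas alpha x) = \sum_j alpha j * ln (x j) by [].
apply: (big_rec2 (fun u v => 0 < u /\ ln u = v)); first by rewrite ln1.
by move=> j u v _ [u_gt0 <-]; rewrite mulr_gt0 ?powR_gt0 // lnM ?posrE ?powR_gt0 // ln_powR.
Qed.

Section Demand.
Hypotheses (alpha_gt0 : forall j, 0 < alpha j) (alpha_sum1 : \sum_j alpha j = 1).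
Variable p : bundle R m.+1.
Hypothesis p_gt0 : forall j, 0 < p j.

Section Budget.
Variable W : R.
Hypothesis W_gt0 : 0 < W.

Let c := cd_demand alpha p W.

Let c_gt0 j : 0 < c j.
Proof. by rewrite /c /cd_demand divr_gt0 ?mulr_gt0. Qed.

Lemma dot_cd_demand : dot p c = W.
Proof.
rewrite /dot -[RHS]mul1r -alpha_sum1 mulr_suml.
by apply: eq_bigr => j _; rewrite /c /cd_demand mulrC divfK ?gt_eqF.
Qed.

(* Compare logarithms: with t j := y j / c j, the weights satisfy
   alpha j * t j = p j * y j / W, so sum alpha j * ln (t j) < p.y / W - 1 <= 0. *)
Lemma cobb_douglas_lt_demand y k : nonneg y -> dot p y <= W -> y k != c k ->
  cobb_douglas alpha y < cobb_douglas alpha c.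
Proof.
move=> y_ge0 y_budget yk_neq.
have cd_c_gt0 : 0 < cobb_douglas alpha c by apply: prodr_gt0 => j _; rewrite powR_gt0.
have [/existsP[j /eqP yj0] | /existsP y_gt0] := boolP [exists j, y j == 0].
  by rewrite (cobb_douglas_eq0 _ yj0).
have {}y_gt0 j : 0 < y j by rewrite lt0r y_ge0 andbT; apply/negP => yj0; apply: y_gt0; exists j.
have t_gt0 j : 0 < y j / c j by rewrite divr_gt0.
rewrite -ltr_ln ?posrE //; last by apply: prodr_gt0 => j _; rewrite powR_gt0.
rewrite !ln_cobb_douglas // -subr_lt0 -sumrB.
under eq_bigr do rewrite -mulrBr -ln_div ?posrE //.
have tk_neq1 : y k / c k != 1.
  apply: contra yk_neq => /eqP ratio1.
  by rewrite -[y k](divfK (lt0r_neq0 (c_gt0 k))) ratio1 mul1r.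
apply: (lt_le_trans (weighted_ln_lt alpha_gt0 t_gt0 tk_neq1)).
have -> : \sum_j alpha j * (y j / c j - 1) = dot p y / W - 1.
  rewrite /dot mulr_suml; under eq_bigr do rewrite mulrBr mulr1.
  rewrite sumrB alpha_sum1; congr (_ - 1); apply: eq_bigr => j _.
  by rewrite /c /cd_demand; field; rewrite !gt_eqF.
by rewrite subr_le0 ler_pdivrMr // mul1r.
Qed.

End Budget.

Lemma in_demand_cobb_douglas e x : 0 < dot p e ->
  in_demand (cobb_douglas alpha) p e x -> forall j, x j = cd_demand alpha p (dot p e) j.
Proof.
move=> income_gt0 [x_ge0 x_budget x_opt] j; apply/eqP; apply: contraT => xj_neq.
have := cobb_douglas_lt_demand income_gt0 x_ge0 x_budget xj_neq.
rewrite ltNge x_opt // ?dot_cd_demand // => k.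
by rewrite /cd_demand divr_ge0 ?mulr_ge0 // ltW.
Qed.

Lemma cobb_douglas_in_demand e x : 0 < dot p e ->
  (forall j, x j = cd_demand alpha p (dot p e) j) -> in_demand (cobb_douglas alpha) p e x.
Proof.
move=> income_gt0 x_demand.
have cd_x : cobb_douglas alpha x = cobb_douglas alpha (cd_demand alpha p (dot p e)).
  by apply: eq_bigr => j _; rewrite x_demand.
split.
- by move=> j; rewrite x_demand /cd_demand divr_ge0 ?mulr_ge0 // ltW.
- suff -> : dot p x = dot p (cd_demand alpha p (dot p e)) by rewrite dot_cd_demand.
  by apply: eq_bigr => j _; rewrite x_demand.
- move=> y y_ge0 y_budget; rewrite cd_x.
  have [/existsP[j yj_neq] | /existsP y_eq] := boolP [exists j, y j != cd_demand alpha p (dot p e) j].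
    exact/ltW/(cobb_douglas_lt_demand income_gt0 y_ge0 y_budget yj_neq).
  suff -> : cobb_douglas alpha y = cobb_douglas alpha (cd_demand alpha p (dot p e)) by [].
  apply: eq_bigr => j _; congr (_ `^ _); apply/eqP/negbNE/negP => yj_neq.
  by apply: y_eq; exists j.
Qed.

End Demand.
End CobbDouglas.

Lemma big_ord2 (T : Type) (idx : T) (op : Monoid.law idx) (F : 'I_2 -> T) :
  \big[op/idx]_(j < 2) F j = op (F ord0) (F ord_max).
Proof. by rewrite big_ord_recr big_ord1; congr (op (F _) _); apply/val_inj. Qed.

Lemma ord2_cases (j : 'I_2) : j = ord0 \/ j = ord_max.
Proof. by case: j => [[|[|//]] lt_j2]; [left | right]; apply/val_inj. Qed.

Definition vec2 (T : Type) (a b : T) (j : 'I_2) : T := if val j == 0%N then a else b.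

Lemma vec2_ord0 (T : Type) (a b : T) : vec2 a b ord0 = a. Proof. by []. Qed.

Lemma vec2_ord_max (T : Type) (a b : T) : vec2 a b ord_max = b. Proof. by []. Qed.

Definition vec2E := (vec2_ord0, vec2_ord_max).

Section TwoAgentsTwoGoods.
Variable R : realType.

Lemma nonneg_vec2 (a b : R) : 0 <= a -> 0 <= b -> nonneg (vec2 a b).
Proof. by move=> a_ge0 b_ge0 j; case: (ord2_cases j) => ->. Qed.

Lemma vec2_gt0 (a b : R) : 0 < a -> 0 < b -> forall j, 0 < vec2 a b j.
Proof. by move=> a_gt0 b_gt0 j; case: (ord2_cases j) => ->. Qed.

Lemma dot2 (p x : bundle R 2) : dot p x = p ord0 * x ord0 + p ord_max * x ord_max.
Proof. exact: big_ord2. Qed.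

Lemma cobb_douglas2 (alpha x : bundle R 2) :
  cobb_douglas alpha x = x ord0 `^ alpha ord0 * x ord_max `^ alpha ord_max.
Proof. exact: big_ord2. Qed.

Lemma competitive_eq2 (u : 'I_2 -> bundle R 2 -> R) e p x :
  competitive_eq u e p x <->
  [/\ nonneg p, (forall j, x ord0 j + x ord_max j = e ord0 j + e ord_max j),
      in_demand (u ord0) p (e ord0) (x ord0) & in_demand (u ord_max) p (e ord_max) (x ord_max)].
Proof.
split=> [[p_ge0 clear demand] | [p_ge0 clear demand0 demand1]].
  by split=> // j; have := clear j; rewrite !big_ord2.
split=> // [j | i]; first by rewrite !big_ord2 /= clear.
by case: (ord2_cases i) => ->.
Qed.

Definition unit_endowments : 'I_2 -> bundle R 2 := vec2 (vec2 1 0) (vec2 0 1).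

Lemma all_to_agent0_eq (u : 'I_2 -> bundle R 2 -> R) :
  (forall y, nonneg y -> y ord0 <= 1 -> u ord0 y <= u ord0 (vec2 1 1)) ->
  (forall y, nonneg y -> y ord0 <= 0 -> u ord_max y <= u ord_max (fun=> 0)) ->
  competitive_eq u unit_endowments (vec2 1 0) (vec2 (vec2 1 1) (fun=> 0)).
Proof.
move=> opt0 opt1; apply/competitive_eq2; rewrite /unit_endowments !vec2E; split.
- exact: nonneg_vec2.
- by move=> j; case: (ord2_cases j) => ->; rewrite !vec2E /= ?addr0 ?add0r.
- split; [exact: nonneg_vec2 | rewrite !dot2 !vec2E; lra | move=> y y_ge0].
  by rewrite !dot2 !vec2E !mul1r !mul0r !addr0; apply: opt0.
- split=> [j | | y y_ge0] //; first by rewrite !dot2 !vec2E; lra.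
  by rewrite !dot2 !vec2E !mul1r !mul0r !addr0; apply: opt1.
Qed.

End TwoAgentsTwoGoods.
Arguments unit_endowments {R}.

Section LeontiefCounterexample.
Variable R : realType.

Definition leontief_economy : 'I_2 -> bundle R 2 -> R :=
  vec2 (leontief (vec2 1 2)) (leontief (vec2 1 1)).

Let leontief12_gt0 : forall j, 0 < (vec2 1 2 : bundle R 2) j := vec2_gt0 ltr01 (ltr0Sn _ 1).
Let leontief11_gt0 : forall j, 0 < (vec2 1 1 : bundle R 2) j := vec2_gt0 ltr01 ltr01.

Lemma leontief_economy_eq_price0 p x :
  competitive_eq leontief_economy unit_endowments p x -> p ord0 = 0.
Proof.
move=> /competitive_eq2[p_ge0 clear demand0 demand1].
rewrite /leontief_economy /unit_endowments !vec2E in demand0 demand1 clear.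
have clear1 := clear ord_max; rewrite !vec2E in clear1.
have p0_ge0 := p_ge0 ord0; have p1_ge0 := p_ge0 ord_max.
have [[x0_ge0 _ _] [x1_ge0 _ _]] := (demand0, demand1).
have x01_ge0 := x0_ge0 ord_max; have x11_ge0 := x1_ge0 ord_max.
apply/le_anti/andP; split=> //; rewrite leNgt; apply/negP => p0_gt0.
have := in_demand_leontief_ge leontief12_gt0 _ _ demand0.
have := in_demand_leontief_ge leontief11_gt0 _ _ demand1.
have := leontief_le (vec2 1 2) (x ord0) ord_max.
have := leontief_le (vec2 1 1) (x ord_max) ord_max.
rewrite !dot2 !vec2E !mulr1 !mulr0 !addr0 !add0r !divr1.
move=> x1_bound x0_bound /(_ p1_ge0 ltac:(lra)) dem1 /(_ (ltW p0_gt0) ltac:(lra)) dem0.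
have {}dem0 := le_trans dem0 x0_bound; have {}dem1 := le_trans dem1 x1_bound.
rewrite ler_pdivrMr in dem0; last lra.
rewrite ler_pdivrMr in dem1; last lra.
(* 2 p_0 / (p_0 + 2 p_1) + p_1 / (p_0 + p_1) <= 1 forces p_0 ^ 2 <= 0. *)
have sum1_ge0 : 0 <= p ord0 + p ord_max by rewrite addr_ge0.
have sum2_ge0 : 0 <= p ord0 + p ord_max * 2 by rewrite addr_ge0 ?mulr_ge0.
have := ler_wpM2r sum1_ge0 dem0; have := ler_wpM2r sum2_ge0 dem1.
have := mulr_gt0 p0_gt0 p0_gt0.
have -> : x ord_max ord_max = 1 - x ord0 ord_max by lra.
nra.
Qed.

Lemma leontief_economy_eq_utility0 p x :
  competitive_eq leontief_economy unit_endowments p x -> leontief (vec2 1 2) (x ord0) <= 0.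
Proof.
move=> x_eq; have p0_eq0 := leontief_economy_eq_price0 x_eq.
move/competitive_eq2: x_eq => [p_ge0 clear [x0_ge0 budget0 opt0] [x1_ge0 _ _]].
rewrite /leontief_economy /unit_endowments !vec2E in budget0 opt0 clear.
have clear1 := clear ord_max; rewrite !vec2E in clear1.
have x0_bound := leontief_le (vec2 1 2) (x ord0) ord_max; rewrite vec2E in x0_bound.
have x01_ge0 := x0_ge0 ord_max; have x11_ge0 := x1_ge0 ord_max.
have [p1_gt0 | p1_le0] := ltrP 0 (p ord_max).
  move: budget0; rewrite !dot2 !vec2E p0_eq0 mul0r add0r mulr0 => budget0.
  have x01_eq0 : x ord0 ord_max = 0 by apply/le_anti/andP; split=> //; nra.
  by rewrite x01_eq0 mul0r in x0_bound.
have p1_eq0 : p ord_max = 0 by apply/le_anti/andP; split=> //; apply: p_ge0.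
have := opt0 (vec2 1 2) (nonneg_vec2 ler01 (ler0n _ 2)).
rewrite !dot2 p0_eq0 p1_eq0 !mul0r addr0 => /(_ (lexx 0)).
by rewrite (leontief_id leontief12_gt0) => /le_trans/(_ x0_bound); lra.
Qed.

Lemma leontief_economy_eq :
  competitive_eq leontief_economy unit_endowments (vec2 0 1) (vec2 (fun=> 0) (vec2 1 1)).
Proof.
rewrite /leontief_economy /unit_endowments; apply/competitive_eq2; rewrite !vec2E; split.
- exact: nonneg_vec2.
- by move=> j; case: (ord2_cases j) => ->; rewrite !vec2E ?addr0 ?add0r.
- split=> [j | | y y_ge0]; rewrite ?dot2 ?vec2E /=; [lra | lra |].
  rewrite (leontief0 leontief12_gt0) => y_budget.
  by apply: le_trans (leontief_le _ _ ord_max) _; rewrite vec2E ler_pdivrMr // mul0r; lra.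
- split; [exact: nonneg_vec2 | rewrite !dot2 !vec2E; lra | move=> y y_ge0].
  rewrite !dot2 !vec2E (leontief_id leontief11_gt0) => y_budget.
  by apply: le_trans (leontief_le _ _ ord_max) _; rewrite vec2E divr1; lra.
Qed.

Lemma is_leontief_vec2 (a b : R) : 0 < a -> 0 < b -> is_leontief (leontief (vec2 a b)).
Proof. by move=> a_gt0 b_gt0; exists (vec2 a b); split=> //; apply: vec2_gt0. Qed.

Lemma leontief_incentive_ratio_ge N : 0 < N -> incentive_ratio_at_least (fun m => @is_leontief R m) N.
Proof.
move=> N_gt0.
have gain_gt0 : 0 < leontief (vec2 1 2) (vec2 1 1 : bundle R 2).
  apply: lt_le_trans (le_leontief (z := 1 / 2) _); first by rewrite divr_gt0.
  by move=> j; case: (ord2_cases j) => ->; rewrite !vec2E ?divr1 ?ler_pdivrMr //; lra.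
exists 2%N, 1%N, leontief_economy, unit_endowments, ord0, (leontief (vec2 1 1)); split.
- by move=> k; case: (ord2_cases k) => ->; apply: is_leontief_vec2.
- by move=> k; case: (ord2_cases k) => ->; apply: nonneg_vec2.
- exact: is_leontief_vec2.
- by exists (vec2 (fun=> 0) (vec2 1 1)), (vec2 0 1); apply: leontief_economy_eq.
exists (vec2 (vec2 1 1) (fun=> 0)); split.
- exists (vec2 1 0); apply: all_to_agent0_eq => y y_ge0 y_budget;
    rewrite /misreport /leontief_economy /= ?vec2E.
  + rewrite (leontief_id leontief11_gt0).
    by apply: le_trans (leontief_le _ _ ord0) _; rewrite vec2E divr1.
  + rewrite (leontief0 leontief11_gt0).
    by apply: le_trans (leontief_le _ _ ord0) _; rewrite vec2E divr1.
- by rewrite /leontief_economy !vec2E.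
- move=> x [p /leontief_economy_eq_utility0]; rewrite /leontief_economy !vec2E => u_le0.
  by apply: le_trans (ltW gain_gt0); rewrite pmulr_rle0.
Qed.

End LeontiefCounterexample.

Section CobbDouglasCounterexample.
Variable R : realType.

Lemma cobb_douglas10 (x : bundle R 2) : nonneg x -> cobb_douglas (vec2 1 0) x = x ord0.
Proof. by move=> x_ge0; rewrite cobb_douglas2 !vec2E powRr1 // powRr0 mulr1. Qed.

Lemma cobb_douglas01 (x : bundle R 2) : nonneg x -> cobb_douglas (vec2 0 1) x = x ord_max.
Proof. by move=> x_ge0; rewrite cobb_douglas2 !vec2E powRr1 // powRr0 mul1r. Qed.

Lemma is_cobb_douglas_vec2 (a c : R) : 0 <= a -> 0 <= c -> a + c = 1 ->
  is_cobb_douglas (cobb_douglas (vec2 a c)).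
Proof.
move=> a_ge0 c_ge0 ac1; exists (vec2 a c); split=> //; last by rewrite big_ord2.
by move=> j; case: (ord2_cases j) => ->; rewrite !vec2E; apply/andP; split=> //; lra.
Qed.

Section Economy.
Variable b : R.
Hypotheses (b_gt0 : 0 < b) (b_lt1 : b < 1).

Let b_ge0 : 0 <= b := ltW b_gt0.

Definition cobb_douglas_economy : 'I_2 -> bundle R 2 -> R :=
  vec2 (cobb_douglas (vec2 0 1)) (cobb_douglas (vec2 b (1 - b))).

Let alpha1_gt0 : forall j, 0 < vec2 b (1 - b) j.
Proof. by apply: vec2_gt0; rewrite ?subr_gt0. Qed.

Let alpha1_sum1 : \sum_j vec2 b (1 - b) j = 1.
Proof. by rewrite big_ord2 /= !vec2E addrC subrK. Qed.

Lemma cobb_douglas_economy_eq :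
  competitive_eq cobb_douglas_economy unit_endowments (vec2 b 1) (vec2 (vec2 0 b) (vec2 1 (1 - b))).
Proof.
rewrite /cobb_douglas_economy /unit_endowments; apply/competitive_eq2; rewrite !vec2E; split.
- exact: nonneg_vec2.
- by move=> j; case: (ord2_cases j) => ->; rewrite !vec2E; lra.
- split; [exact: nonneg_vec2 | rewrite !dot2 !vec2E; lra | move=> y y_ge0].
  rewrite !dot2 !vec2E !cobb_douglas01 ?vec2E //; last exact: nonneg_vec2.
  have := mulr_ge0 b_ge0 (y_ge0 ord0); lra.
- apply: cobb_douglas_in_demand => //; first exact: vec2_gt0.
    by rewrite dot2 !vec2E; lra.
  by move=> j; case: (ord2_cases j) => ->; rewrite /cd_demand dot2 !vec2E; field; rewrite ?gt_eqF.
Qed.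

Lemma cobb_douglas_economy_price_gt0 p x :
  competitive_eq cobb_douglas_economy unit_endowments p x -> forall j, 0 < p j.
Proof.
move=> /competitive_eq2[p_ge0 clear [x0_ge0 budget0 opt0] [x1_ge0 _ opt1]].
rewrite /cobb_douglas_economy /unit_endowments !vec2E in budget0 opt0 opt1 clear.
have clear0 := clear ord0; have clear1 := clear ord_max; rewrite !vec2E in clear0 clear1.
have p1_gt0 : 0 < p ord_max.
  rewrite lt_def p_ge0 andbT; apply/eqP => p1_eq0.
  pose y := vec2 (x ord0 ord0) (x ord0 ord_max + 1).
  have y_ge0 : nonneg y by apply: nonneg_vec2; have := x0_ge0 ord0; have := x0_ge0 ord_max; lra.
  have y_budget : dot p y <= dot p (vec2 1 0).
    by move: budget0; rewrite !dot2 !vec2E p1_eq0 !mul0r.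
  by have := opt0 _ y_ge0 y_budget; rewrite !cobb_douglas01 // /y vec2E; lra.
have p0_gt0 : 0 < p ord0.
  rewrite lt_def p_ge0 andbT; apply/eqP => p0_eq0.
  have x1_le1 j : x ord_max j <= 1.
    by case: (ord2_cases j) => ->; [have := x0_ge0 ord0 | have := x0_ge0 ord_max]; lra.
  have := opt1 (vec2 2 1) (nonneg_vec2 (ler0n _ 2) ler01).
  rewrite !dot2 !vec2E p0_eq0 !mul0r !add0r => /(_ (lexx _)).
  rewrite cobb_douglas2 !vec2E powR1 /= mulr1.
  have : (1 : R) `^ b < 2 `^ b by rewrite gt0_ltr_powR ?nnegrE // ltr1n.
  rewrite powR1 /=.
  have := le_cobb_douglas (fun j => ltW (alpha1_gt0 j)) x1_ge0 x1_le1.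
  rewrite cobb_douglas1; lra.
by move=> j; case: (ord2_cases j) => ->.
Qed.

Lemma cobb_douglas_economy_share p x :
  competitive_eq cobb_douglas_economy unit_endowments p x -> x ord0 ord_max = b.
Proof.
move=> x_eq; have p_gt0 := cobb_douglas_economy_price_gt0 x_eq.
move/competitive_eq2: x_eq => [_ clear _ demand1].
rewrite /cobb_douglas_economy /unit_endowments !vec2E in demand1 clear.
have clear1 := clear ord_max; rewrite !vec2E in clear1.
have := in_demand_cobb_douglas alpha1_gt0 alpha1_sum1 p_gt0 _ demand1 ord_max.
rewrite /cd_demand !dot2 !vec2E mulr0 add0r mulr1 mulfK ?gt_eqF // => /(_ (p_gt0 ord_max)).
lra.
Qed.

End Economy.

Lemma cobb_douglas_incentive_ratio_ge N :
  0 < N -> incentive_ratio_at_least (fun m => @is_cobb_douglas R m) N.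
Proof.
move=> N_gt0; pose b := (N + 1)^-1.
have b_gt0 : 0 < b by rewrite invr_gt0; lra.
have b_lt1 : b < 1 by rewrite invf_lt1; lra.
have Nb_le1 : N * b <= 1 by rewrite ler_pdivrMr; lra.
exists 2%N, 1%N, (cobb_douglas_economy b), unit_endowments, ord0, (cobb_douglas (vec2 1 0)); split.
- by move=> k; case: (ord2_cases k) => ->; apply: is_cobb_douglas_vec2; lra.
- by move=> k; case: (ord2_cases k) => ->; apply: nonneg_vec2.
- by apply: is_cobb_douglas_vec2; lra.
- by exists (vec2 (vec2 0 b) (vec2 1 (1 - b))), (vec2 b 1); apply: cobb_douglas_economy_eq.
exists (vec2 (vec2 1 1) (fun=> 0)); split.
- exists (vec2 1 0); apply: all_to_agent0_eq => y y_ge0 y_budget;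
    rewrite /misreport /cobb_douglas_economy /= ?vec2E.
  + by rewrite !cobb_douglas10 //; exact: nonneg_vec2.
  + have y0_eq0 : y ord0 = 0 by apply/le_anti/andP.
    by rewrite !(cobb_douglas_eq0 (j := ord0)) ?vec2E.
- by rewrite /cobb_douglas_economy vec2E cobb_douglas01 ?vec2E //; exact: nonneg_vec2.
- move=> x [p x_eq]; have [_ _ /(_ ord0)[x0_ge0 _ _]] := x_eq.
  rewrite /cobb_douglas_economy !vec2E !cobb_douglas01 ?vec2E //; last exact: nonneg_vec2.
  by rewrite (cobb_douglas_economy_share b_gt0 b_lt1 x_eq).
Qed.

End CobbDouglasCounterexample.

Theorem proposition1 (R : realType) :
  (forall N : R, 0 < N -> incentive_ratio_at_least (fun m => @is_leontief R m) N) /\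
  (forall N : R, 0 < N -> incentive_ratio_at_least (fun m => @is_cobb_douglas R m) N).
Proof. by split=> N; [exact: leontief_incentive_ratio_ge | exact: cobb_douglas_incentive_ratio_ge]. Qed.
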